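(* Let $n,t,t'$ be positive integers with $n\ge t+12$ and $\prod_{j=n-t'+1}^{n} j\ge 2(t+2)(2t+1)t^2$, and let $m\ge0$ be an integer. Then there exist a map $\mathcal{E}_r:\mathcal{S}_n\to\mathcal{S}_{n+t'+1}$ and a decoding map $\mathcal{D}$ such that for every $\sigma\in\mathcal{S}_n$ and every sequence $\pi_e$ obtained from $\pi=\mathcal{E}_r(\sigma)$ by a single rank-modulation stuck-at error with parameters $t,m$ (as defined in the context), we have $\mathcal{D}(\pi_e)=\sigma$.
   Context: $\mathcal{S}_N$ denotes the set of permutations $\pi=(\pi(1),\ldots,\pi(N))$ of $[N]=\{1,\ldots,N\}$. Rank-modulation stuck-at error with parameters $t,m$: $\pi_e$ is obtained from $\pi\in\mathcal{S}_N$ if there exist a position $i_1\in[N]$ with $\pi(i_1)>m$ and $t_1\in[t]$ such that $\pi_e(i_1)=\pi(i_1)-t_1$, $\pi_e(i)=\pi(i)-1$ for all $i$ with $\pi(i)>\pi(i_1)$, and $\pi_e(i)=\pi(i)$ for all other $i$. *)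

From mathcomp Require Import all_boot all_order all_algebra all_fingroup.
Set Implicit Arguments. Unset Strict Implicit. Unset Printing Implicit Defensive.
Import GRing.Theory Num.Theory.
Local Open Scope ring_scope.

(* A permutation pi of [N] = {1..N} is represented by p : 'S_N (a permutation
   of 'I_N = {0..N-1}); the paper's value pi(i) is (p i).+1, positions are
   shifted by one as well.  Received (erroneous) sequences are integer-valued
   functions of the positions, since pi(i1) - t1 may fall outside [N] and
   values may collide. *)
Definition pval (N : nat) (p : 'S_N) (i : 'I_N) : int := ((p i).+1 : nat)%:Z.

Definition stuck_at_error (t m N : nat) (p : 'S_N) (pe : {ffun 'I_N -> int}) : Prop :=
  exists (i1 : 'I_N) (t1 : nat),
    [/\ (1 <= t1 <= t)%N,
        (m < (p i1).+1)%N,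
        pe i1 = pval p i1 - t1%:Z
      & forall i : 'I_N, i != i1 ->
          pe i = if pval p i1 < pval p i then pval p i - 1 else pval p i].

From Pilot Require Import Defs.
From mathcomp Require Import all_boot all_order all_algebra all_fingroup.
From mathcomp Require Import zify.
Set Implicit Arguments. Unset Strict Implicit. Unset Printing Implicit Defensive.

(* A greedy, Gilbert-Varshamov style argument.  Let N = n + t' + 1.  Every
   reading of a received word puts the stuck cell at one of at most two
   positions (those sharing the value of the stuck cell) and the drop among t
   values, and these data determine the permutation; so at most 2t
   permutations of S_N can produce a given word.  A permutation produces at
   most N t words, hence is confusable with at most 2 N t^2 permutations, and
   a maximal set of pairwise non-confusable permutations has at least
   N! / (2 N t^2 + 1) >= n! elements.  Encode S_n injectively into that set
   and decode by picking the codeword able to produce the received word. *)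

(* perm.v exports its own [pval] (the graph of a permutation). *)
Local Notation pval := Defs.pval.

Lemma card_has_leq (T : finType) (I : Type) (P : I -> pred T) (s : seq I) d :
  (forall i, #|[set x | P i x]| <= d) -> #|[set x | has (P^~ x) s]| <= size s * d.
Proof.
move=> card_P; elim: s => [|i s IHs].
  by rewrite leqn0 cards_eq0; apply/eqP/setP => x; rewrite !inE.
have -> : [set x | has (P^~ x) (i :: s)] = [set x | P i x] :|: [set x | has (P^~ x) s].
  by apply/setP => x; rewrite !inE.
by rewrite mulSn (leq_trans (leq_card_setU _ _)) ?leq_add.
Qed.

Definition independent (T : finType) (r : rel T) (C : {set T}) : bool :=
  [forall x in C, forall y in C, r x y ==> (x == y)].

Lemma independentP (T : finType) (r : rel T) (C : {set T}) :
  reflect {in C &, forall x y, r x y -> x = y} (independent r C).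
Proof.
apply: (iffP forall_inP) => [indepC x y xC yC rxy | indepC x xC].
  by apply/eqP; move/forall_inP: (indepC x xC) => /(_ y yC) /implyP; apply.
by apply/forall_inP => y yC; apply/implyP => rxy; apply/eqP/indepC.
Qed.

Section GreedyIndependentSet.

Variables (T : finType) (r : rel T) (d : nat).
Hypothesis r_sym : symmetric r.
Hypothesis card_nbhd : forall x, #|[set y | r x y]| <= d.

Lemma exists_independent_set :
  exists2 C : {set T}, independent r C & #|T| <= #|C| * d.+1.
Proof.
have indep0 : independent r set0 by apply/independentP => x; rewrite inE.
have [C maxC _] := maxset_exists indep0.
exists C; first exact: maxsetp maxC.
have /independentP indepC := maxsetp maxC.
have cover x : has (fun c => (x == c) || r c x) (enum C).
  apply/negPn/negP; rewrite -all_predC => /allP notC.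
  have {}notC c : c \in C -> ~~ ((x == c) || r c x).
    by move=> cC; apply: notC; rewrite mem_enum.
  have indep_xC : independent r (x |: C).
    apply/independentP => y z /setU1P y_xC /setU1P z_xC.
    case: y_xC z_xC => [->|yC] [->|zC] ryz //.
    - by have /norP[_] := notC z zC; rewrite r_sym ryz.
    - by have /norP[_] := notC y yC; rewrite ryz.
    - exact: indepC.
  have xC : x \in C by rewrite -(maxsetsup maxC indep_xC (subsetUr _ _)) setU11.
  by have /norP[] := notC x xC; rewrite eqxx.
have card_closed_nbhd c : #|[set x | (x == c) || r c x]| <= d.+1.
  rewrite (@eq_card _ _ (c |: [set y | r c y])) => [|x]; last by rewrite !inE.
  by rewrite cardsU1 -add1n leq_add ?leq_b1 ?card_nbhd.
rewrite [#|C|]cardE; apply: leq_trans (card_has_leq (enum C) card_closed_nbhd).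
by apply: subset_leq_card; apply/subsetP => x _; rewrite inE cover.
Qed.

End GreedyIndependentSet.

Section DecodingByBalls.

Variables (T : finType) (X : eqType) (ball : T -> seq X).

Definition confusable : rel T := fun p q => has (mem (ball q)) (ball p).

Lemma confusable_sym : symmetric confusable.
Proof. by move=> p q; rewrite /confusable has_sym. Qed.

Lemma card_confusable p d :
  (forall x, #|[set q | x \in ball q]| <= d) ->
  #|[set q | confusable p q]| <= size (ball p) * d.
Proof. exact: card_has_leq. Qed.

Lemma exists_ball_decoder (S : finType) d :
  (forall p, #|[set q | confusable p q]| <= d) -> #|S| * d.+1 <= #|T| ->
  exists (E : S -> T) (D : X -> option S),
    forall s x, x \in ball (E s) -> D x = Some s.
Proof.
move=> card_conf card_ST.
have [C indepC card_TC] := exists_independent_set confusable_sym card_conf.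
have card_SC : #|S| <= #|C|.
  by rewrite -(leq_pmul2r (ltn0Sn d)) (leq_trans card_ST card_TC).
pose E s := enum_val (widen_ord card_SC (enum_rank s)).
have E_inj : injective E.
  by move=> s1 s2 /enum_val_inj /(congr1 val) /= /val_inj; apply: enum_rank_inj.
exists E, (fun x => [pick s | x \in ball (E s)]) => s x xEs.
case: pickP => [s' xEs'|/(_ s)]; last by rewrite xEs.
move/independentP: indepC => indepC.
congr Some; apply: E_inj; apply: (indepC _ _ (enum_valP _) (enum_valP _)).
by apply/hasP; exists x.
Qed.

End DecodingByBalls.

Definition shift_down (a y : int) : int := if (a < y)%R then (y - 1)%R else y.

Lemma shift_down_inj (a y z : int) :
  y != a -> z != a -> shift_down a y = shift_down a z -> y = z.
Proof. by rewrite /shift_down => /eqP ya /eqP za; case: ifP; case: ifP; lia. Qed.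

Section StuckAtErrors.

Variable N : nat.
Implicit Types (p q : 'S_N) (i j : 'I_N).

Lemma pval_inj p : injective (pval p).
Proof. by move=> i j /eqP; rewrite eqz_nat eqSS => /eqP /val_inj /perm_inj. Qed.

Definition stuck_at_word p i1 t1 : {ffun 'I_N -> int} :=
  [ffun i => if i == i1 then (pval p i1 - t1%:Z)%R
             else shift_down (pval p i1) (pval p i)].

Definition stuck_at_ball t m p : seq {ffun 'I_N -> int} :=
  [seq stuck_at_word p i1 t1 | i1 <- [seq i <- enum 'I_N | m < (p i).+1],
                               t1 <- iota 1 t].

Lemma stuck_at_ballP t m p pe :
  reflect (exists i1 t1, [/\ 0 < t1 <= t, m < (p i1).+1 & pe = stuck_at_word p i1 t1])
          (pe \in stuck_at_ball t m p).
Proof.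
apply: (iffP allpairsP) => [[[i1 t1] /= [] ]|[i1 [t1 [t1_t m_i1 ->]]]].
  rewrite mem_filter mem_iota => /andP[m_i1 _] t1_t ->.
  by exists i1, t1; split => //; lia.
by exists (i1, t1); rewrite /= mem_filter mem_enum mem_iota m_i1; split => //; lia.
Qed.

Lemma stuck_at_error_in_ball t m p pe :
  stuck_at_error t m p pe -> pe \in stuck_at_ball t m p.
Proof.
case=> i1 [t1] [t1_t m_i1 pe_i1 pe_off]; apply/stuck_at_ballP; exists i1, t1.
split=> //; apply/ffunP => i; rewrite ffunE.
by case: eqP => [->|/eqP i_i1] //; rewrite pe_off.
Qed.

Lemma size_stuck_at_ball t m p : size (stuck_at_ball t m p) <= N * t.
Proof.
rewrite size_allpairs size_iota leq_mul2r -[N in _ <= N]size_enum_ord.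
by rewrite size_filter count_size orbT.
Qed.

Lemma stuck_at_word_off p i1 t1 i :
  i != i1 -> stuck_at_word p i1 t1 i = shift_down (pval p i1) (pval p i).
Proof. by move=> /negbTE i_i1; rewrite ffunE i_i1. Qed.

Lemma stuck_at_word_ge1 p i1 t1 i : i != i1 -> (1 <= stuck_at_word p i1 t1 i)%R.
Proof.
by move=> i_i1; rewrite stuck_at_word_off // /shift_down /pval; case: ifP; lia.
Qed.

Lemma stuck_at_word_inj_off p i1 t1 i j :
  i != i1 -> j != i1 -> stuck_at_word p i1 t1 i = stuck_at_word p i1 t1 j -> i = j.
Proof.
move=> i_i1 j_i1; rewrite !stuck_at_word_off // => /shift_down_inj.
by rewrite !(inj_eq (@pval_inj p)) => /(_ i_i1 j_i1) /pval_inj.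
Qed.

Lemma stuck_at_word_perm_inj p q i1 t1 :
  stuck_at_word p i1 t1 = stuck_at_word q i1 t1 -> p = q.
Proof.
move/ffunP=> pq_eq.
have pq_i1 : pval p i1 = pval q i1 by move: (pq_eq i1); rewrite !ffunE eqxx /pval; lia.
suff pq_val i : pval p i = pval q i.
  by apply/permP => i; apply/val_inj/eqP; have /eqP := pq_val i; rewrite eqz_nat eqSS.
have [-> // | i_i1] := eqVneq i i1.
move: (pq_eq i); rewrite !stuck_at_word_off // -pq_i1.
move/shift_down_inj; apply; first by rewrite (inj_eq (@pval_inj p)).
by rewrite pq_i1 (inj_eq (@pval_inj q)).
Qed.

Lemma stuck_at_word_collision p i1 t1 :
  0 < t1 -> (1 <= stuck_at_word p i1 t1 i1)%R ->
  exists2 l, l != i1 & stuck_at_word p i1 t1 l = stuck_at_word p i1 t1 i1.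
Proof.
rewrite ffunE eqxx /pval => t1_gt0 t1_le.
have k_lt : p i1 - t1 < N by have := ltn_ord (p i1); lia.
have p_l := permKV p (Ordinal k_lt).
exists ((p^-1)%g (Ordinal k_lt)).
  by apply/eqP => l_i1; move: p_l; rewrite l_i1 => /(congr1 val) /=; lia.
rewrite stuck_at_word_off; last first.
  by apply/eqP => l_i1; move: p_l; rewrite l_i1 => /(congr1 val) /=; lia.
by rewrite /shift_down /pval p_l /=; case: ifP; lia.
Qed.

(* The value at [i] is repeated in the word, while the second reading can only
   repeat the value at [j]. *)
Lemma stuck_at_word_eq_at_positions p q i j t1 t1' :
  0 < t1 -> stuck_at_word p i t1 = stuck_at_word q j t1' -> i != j ->
  stuck_at_word p i t1 i = stuck_at_word p i t1 j.
Proof.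
move=> t1_gt0 pq_eq i_j.
have [l l_i pe_l] : exists2 l, l != i & stuck_at_word p i t1 l = stuck_at_word p i t1 i.
  by apply: stuck_at_word_collision; rewrite // pq_eq stuck_at_word_ge1.
have [<- // | l_j] := eqVneq l j.
have i_l : i = l.
  by apply: (stuck_at_word_inj_off (p := q) (t1 := t1') i_j l_j); rewrite -pq_eq pe_l.
by rewrite i_l eqxx in l_i.
Qed.

Lemma card_stuck_at_preimage t m pe :
  #|[set q | pe \in stuck_at_ball t m q]| <= 2 * t.
Proof.
have [-> | [q0]] := set_0Vmem [set q | pe \in stuck_at_ball t m q].
  by rewrite cards0.
rewrite inE => /stuck_at_ballP[i0 [t0 [/andP[t0_gt0 _] _ pe_q0]]].
pose S := [set i | pe i == pe i0].
have card_S : #|S| <= 2.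
  rewrite (cardsD1 i0) inE eqxx add1n ltnS.
  apply/card_le1_eqP => i j; rewrite !inE.
  move=> /andP[i_i0 /eqP pe_i] /andP[j_i0 /eqP pe_j].
  apply: (stuck_at_word_inj_off (p := q0) (t1 := t0) j_i0 i_i0).
  by rewrite -pe_q0 pe_i pe_j.
pose readings := [seq (i, t1) | i <- enum S, t1 <- iota 1 t].
have /subset_leq_card preim_sub : [set q | pe \in stuck_at_ball t m q] \subset
    [set q | has (fun it => pe == stuck_at_word q it.1 it.2) readings].
  apply/subsetP => q; rewrite !inE => /stuck_at_ballP[i [t1 [t1_t _ pe_q]]].
  apply/hasP; exists (i, t1); last by rewrite pe_q.
  apply/allpairsP; exists (i, t1); split=> //=; last by rewrite mem_iota; lia.
  rewrite mem_enum inE; have [-> // | i_i0] := eqVneq i i0.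
  rewrite pe_q; apply/eqP/(stuck_at_word_eq_at_positions _ _ i_i0); first lia.
  by rewrite -pe_q; exact: pe_q0.
have card_reading (it : 'I_N * nat) :
    #|[set q | pe == stuck_at_word q it.1 it.2]| <= 1.
  by apply/card_le1_eqP => q q'; rewrite !inE => /eqP -> /eqP /stuck_at_word_perm_inj.
apply: (leq_trans preim_sub); apply: (leq_trans (card_has_leq readings card_reading)).
by rewrite muln1 size_allpairs size_iota -cardE leq_mul2r card_S orbT.
Qed.

End StuckAtErrors.

Lemma leq_fact_mul_succ n t t' :
  0 < t -> 2 * (t + 2) * (2 * t + 1) * t ^ 2 <= n ^_ t' ->
  n`! * ((n + t' + 1) * t * (2 * t)).+1 <= (n + t' + 1)`!.
Proof.
move=> t_gt0 ffact_ge.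
have fact_N : (n + t' + 1)`! = (n + t' + 1) * (n + t') ^_ t' * n`!.
  rewrite -(@ffact_fact (n + t' + 1) t'.+1) ?addn1 ?ltnS ?leq_addl //.
  by rewrite ffactSS subSS addnK.
have ffact_mono : n ^_ t' <= (n + t') ^_ t'.
  by rewrite !ffact_prod; apply: leq_prod => i _; lia.
have ffact_big : 2 * t * t < (n + t') ^_ t'.
  by apply: leq_trans ffact_mono; apply: leq_trans ffact_ge; nia.
by rewrite fact_N mulnC leq_pmul2r ?fact_gt0 //; nia.
Qed.

Theorem theorem3 (n t t' m : nat) :
  (0 < n)%N -> (0 < t)%N -> (0 < t')%N ->
  (t + 12 <= n)%N ->
  (2 * (t + 2) * (2 * t + 1) * t ^ 2 <= \prod_(i < t') (n - i))%N ->
  exists (E : 'S_n -> 'S_(n + t' + 1))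
         (D : {ffun 'I_(n + t' + 1) -> int} -> 'S_n),
    forall (sigma : 'S_n) (pe : {ffun 'I_(n + t' + 1) -> int}),
      stuck_at_error t m (E sigma) pe -> D pe = sigma.
Proof.
move=> _ t_gt0 _ _; rewrite -ffact_prod => ffact_ge.
set N := n + t' + 1.
have card_conf (p : 'S_N) :
    #|[set q | confusable (stuck_at_ball t m) p q]| <= N * t * (2 * t).
  apply: leq_trans (card_confusable _ (@card_stuck_at_preimage N t m)) _.
  by rewrite leq_mul2r size_stuck_at_ball orbT.
have card_SnN : #|'S_n| * (N * t * (2 * t)).+1 <= #|'S_N|.
  by rewrite !card_Sn leq_fact_mul_succ.
have [E [D decode]] := exists_ball_decoder card_conf card_SnN.
exists E, (fun pe => odflt 1%g (D pe)) => sigma pe /stuck_at_error_in_ball err.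
by rewrite (decode _ _ err).
Qed.
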